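(* Let $\lambda\in[0,1]$ and $\alpha\ge1$, and let $\mathcal O$ be any online algorithm for the fractional online knapsack program below that, on every instance, outputs a feasible solution $y^{\mathcal O}$ with $\sum_i y^{\mathcal O}_i\ge \mathsf{OPT}/\alpha$. Then Algorithm 1 run with $\mathcal O$, advice $y'\in\mathbb{R}^m_{\ge0}$, $\lambda$ and $\beta=1$ outputs $\bar y$ with $\sum_{i=1}^m \frac{w_i}{v_i}\bar y_i\le (2-\lambda)C$ and $\sum_i\bar y_i\ge \frac{\lambda}{\alpha}\mathsf{OPT}$; and if the advice is feasible, i.e. $\sum_i \frac{w_i}{v_i}y'_i\le C$, then also $\sum_i\bar y_i\ge(1-\lambda)\sum_i y'_i$.
   Context: Online knapsack program: items $i=1,\dots,m$ arrive online, item $i$ having value $v_i>0$ and weight $w_i>0$; with capacity $C>0$ known in advance, maximize $\sum_{i=1}^m y_i$ over $y\in\mathbb{R}^m_{\ge0}$ subject to $\sum_{i=1}^m \frac{w_i}{v_i}y_i\le C$, where $y_i$ must be irrevocably fixed when item $i$ arrives. $\mathsf{OPT}$ is the optimal offline value. Algorithm 1: run $\mathcal O$ in parallel; in round $i$ obtain $y_i^{\mathcal O}$; if $\sum_{k\le i}\frac{w_k}{v_k}y'_k\le \beta C$ set $y_i=\lambda y^{\mathcal O}_i+(1-\lambda)y'_i$, otherwise set $y_i=y_i^{\mathcal O}$. *)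

From HB Require Import structures.
From mathcomp Require Import all_boot all_order all_algebra.
From mathcomp Require Import classical_sets reals.
Set Implicit Arguments. Unset Strict Implicit. Unset Printing Implicit Defensive.
Import Order.TTheory GRing.Theory Num.Theory.
Local Open Scope ring_scope.
Local Open Scope classical_set_scope.

Section Knapsack.
Variable R : realType.

Definition item := (R * R)%type.
Definition val (it : item) : R := it.1.
Definition wgt (it : item) : R := it.2.

Definition valid_items (s : seq item) : Prop :=
  forall i, (i < size s)%N -> 0 < val (nth (0,0) s i) /\ 0 < wgt (nth (0,0) s i).

Definition kcost (s : seq item) (y : nat -> R) : R :=
  \sum_(i < size s) (wgt (nth (0,0) s i) / val (nth (0,0) s i)) * y i.

Definition ktotal (s : seq item) (y : nat -> R) : R := \sum_(i < size s) y i.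

Definition feasible (C : R) (s : seq item) (y : nat -> R) : Prop :=
  (forall i, (i < size s)%N -> 0 <= y i) /\ kcost s y <= C.

Definition OPT (C : R) (s : seq item) : R :=
  sup [set ktotal s y | y in [set y | feasible C s y]].

(* A deterministic online algorithm: given the (known in advance) capacity and
   the prefix of items that have arrived so far (the last one being the current
   item), it irrevocably fixes the value for the current item. *)
Definition online_alg := R -> seq item -> R.

Definition run (O : online_alg) (C : R) (s : seq item) : nat -> R :=
  fun i => O C (take i.+1 s).

Definition competitive (O : online_alg) (alpha : R) : Prop :=
  forall (C : R) (s : seq item), 0 < C -> valid_items s ->
    feasible C s (run O C s) /\ OPT C s / alpha <= ktotal s (run O C s).

Definition alg1 (O : online_alg) (y' : nat -> R) (lambda beta C : R)
    (s : seq item) : nat -> R :=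
  fun i =>
    if \sum_(k < i.+1) (wgt (nth (0,0) s k) / val (nth (0,0) s k)) * y' k
       <= beta * C
    then lambda * run O C s i + (1 - lambda) * y' i
    else run O C s i.

End Knapsack.

From Pilot Require Import Defs.
From HB Require Import structures.
From mathcomp Require Import all_boot all_order all_algebra.
From mathcomp Require Import classical_sets reals.
From mathcomp Require Import lra.
Set Implicit Arguments.
Unset Strict Implicit.
Unset Printing Implicit Defensive.

Import Order.TTheory GRing.Theory Num.Theory.
Local Open Scope ring_scope.

(* In every round Algorithm 1 pays at most what O pays, plus (1 - lambda) times
   the cost of the advice, but only while the running cost of the advice stays
   within beta C; so the advice adds at most (1 - lambda) beta C to the cost of
   O, which is at most C.  The value bounds hold coordinatewise: each output
   dominates lambda y^O_i, and when the whole advice fits in the budget every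
   round takes the mixed branch, so each output also dominates
   (1 - lambda) y'_i. *)

Section PrefixSums.
Variable R : numDomainType.

Lemma sumr_prefix_le (a : nat -> R) (m n : nat) :
  (m <= n)%N -> (forall i, (m <= i < n)%N -> 0 <= a i) ->
  \sum_(i < m) a i <= \sum_(i < n) a i.
Proof.
move=> le_mn a_ge0; rewrite -!(big_mkord xpredT) (big_cat_nat (leq0n m) le_mn).
rewrite lerDl big_nat_cond sumr_ge0 // => i /andP[+ _]; exact: a_ge0.
Qed.

Lemma sumr_thresholded_le (a : nat -> R) (B : R) (n : nat) :
  0 <= B -> (forall i, (i < n)%N -> 0 <= a i) ->
  \sum_(i < n) (if \sum_(k < i.+1) a k <= B then a i else 0) <= B.
Proof.
move=> B_ge0 a_ge0.
suff [] : \sum_(i < n) (if \sum_(k < i.+1) a k <= B then a i else 0) <= B /\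
          \sum_(i < n) (if \sum_(k < i.+1) a k <= B then a i else 0)
            <= \sum_(k < n) a k by [].
elim: n a_ge0 => [|n IH] a_ge0; first by rewrite !big_ord0.
have [IH_B IH_prefix] := IH (fun i lt_in => a_ge0 i (ltnW lt_in)).
rewrite (big_ord_recr n) /=; case: ifP => [prefix_le_B | _].
  rewrite big_ord_recr /= in prefix_le_B.
  split; first by apply: le_trans prefix_le_B; rewrite lerD2r.
  by rewrite [X in _ <= X](big_ord_recr n) lerD2r.
rewrite addr0; split=> //; apply: le_trans IH_prefix _.
by apply: sumr_prefix_le => // i /andP[_]; apply: a_ge0.
Qed.

End PrefixSums.

Definition unit_cost (R : realType) (s : seq (item R)) (i : nat) : R :=
  Defs.wgt (nth (0,0) s i) / Defs.val (nth (0,0) s i).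

Section Algorithm1.
Variables (R : realType) (O : online_alg R) (y' : nat -> R) (lambda beta C : R).
Variable s : seq (item R).
Hypotheses (lambda_ge0 : 0 <= lambda) (lambda_le1 : lambda <= 1).
Hypothesis valid_s : valid_items s.
Hypothesis y'_ge0 : forall i, (i < size s)%N -> 0 <= y' i.
Hypothesis run_ge0 : forall i, (i < size s)%N -> 0 <= run O C s i.

Local Notation yO := (run O C s).
Local Notation ybar := (alg1 O y' lambda beta C s).
Local Notation advice_prefix_fits i :=
  (\sum_(k < i.+1) unit_cost s k * y' k <= beta * C).

Lemma kcostE (y : nat -> R) : kcost s y = \sum_(i < size s) unit_cost s i * y i.
Proof. by []. Qed.

Lemma unit_cost_gt0 i : (i < size s)%N -> 0 < unit_cost s i.
Proof. by move=> lt_is; have [? ?] := valid_s lt_is; apply: divr_gt0. Qed.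

Lemma alg1E i : ybar i =
  if advice_prefix_fits i then lambda * yO i + (1 - lambda) * y' i else yO i.
Proof. by []. Qed.

Lemma alg1_ge_run i : (i < size s)%N -> lambda * yO i <= ybar i.
Proof.
move=> lt_is; rewrite alg1E.
case: ifP => _; last exact: ler_piMl (run_ge0 lt_is) lambda_le1.
by rewrite lerDl mulr_ge0 ?subr_ge0 ?y'_ge0.
Qed.

Lemma alg1_ge_advice i : (i < size s)%N -> advice_prefix_fits i ->
  (1 - lambda) * y' i <= ybar i.
Proof. by move=> lt_is fits; rewrite alg1E fits lerDr mulr_ge0 ?run_ge0. Qed.

Lemma unit_cost_alg1_le i : (i < size s)%N ->
  unit_cost s i * ybar i <= unit_cost s i * yO i +
    (1 - lambda) * (if advice_prefix_fits i then unit_cost s i * y' i else 0).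
Proof.
move=> lt_is; rewrite alg1E; case: ifP => _; last by rewrite mulr0 addr0.
rewrite mulrDr [X in _ + X <= _]mulrCA lerD2r mulrCA.
by rewrite ler_piMl // mulr_ge0 ?run_ge0 // ltW ?unit_cost_gt0.
Qed.

Lemma kcost_alg1_le : 0 <= beta * C ->
  kcost s ybar <= kcost s yO + (1 - lambda) * (beta * C).
Proof.
move=> budget_ge0; rewrite !kcostE.
apply: le_trans; first by apply: ler_sum => i _; exact: unit_cost_alg1_le.
rewrite big_split /= lerD2l -mulr_sumr ler_wpM2l ?subr_ge0 //.
apply: (sumr_thresholded_le (a := fun k => unit_cost s k * y' k)) => // i lt_is.
exact: mulr_ge0 (ltW (unit_cost_gt0 lt_is)) (y'_ge0 lt_is).
Qed.

Lemma ktotal_alg1_ge_run : lambda * ktotal s yO <= ktotal s ybar.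
Proof. by rewrite mulr_sumr; apply: ler_sum => i _; apply: alg1_ge_run. Qed.

Lemma ktotal_alg1_ge_advice : kcost s y' <= beta * C ->
  (1 - lambda) * ktotal s y' <= ktotal s ybar.
Proof.
move=> advice_fits; rewrite mulr_sumr; apply: ler_sum => i _.
apply: alg1_ge_advice => //; apply: le_trans _ advice_fits.
apply: (sumr_prefix_le (a := fun k => unit_cost s k * y' k)) => //.
move=> k /andP[_ lt_ks].
exact: mulr_ge0 (ltW (unit_cost_gt0 lt_ks)) (y'_ge0 lt_ks).
Qed.

End Algorithm1.

Theorem mainTheorem2 (R : realType) (lambda alpha : R) (O : online_alg R)
  (hl0 : 0 <= lambda) (hl1 : lambda <= 1) (ha : 1 <= alpha)
  (hO : competitive O alpha)
  (C : R) (s : seq (item R)) (y' : nat -> R)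
  (hC : 0 < C) (hs : valid_items s)
  (hy' : forall i, (i < size s)%N -> 0 <= y' i) :
  kcost s (alg1 O y' lambda 1 C s) <= (2 - lambda) * C /\
  lambda / alpha * OPT C s <= ktotal s (alg1 O y' lambda 1 C s) /\
  (kcost s y' <= C ->
     (1 - lambda) * ktotal s y' <= ktotal s (alg1 O y' lambda 1 C s)).
Proof.
have [[yO_ge0 yO_cost_le] yO_competitive] := hO C s hC hs.
have budget_ge0 : 0 <= 1 * C by rewrite mul1r ltW.
split; [|split].
- apply: le_trans (kcost_alg1_le hl1 hs hy' yO_ge0 budget_ge0) _.
  by rewrite mul1r; lra.
- apply: le_trans _ (ktotal_alg1_ge_run 1 hl1 hy' yO_ge0).
  by rewrite mulrAC -mulrA ler_wpM2l.
- by move=> advice_fits; apply: ktotal_alg1_ge_advice; rewrite ?mul1r.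
Qed.
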